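(* Let $T$ be a singular weighted tree. Then $T^{\#}$ is a tree if and only if $T$ is a star.
   Context: A weighted tree has a nonzero real weight on each edge; it is singular if its adjacency matrix $A$ ($(i,j)$ entry equal to the weight of edge $v_iv_j$, or $0$ if no edge) is singular. $A^{\#}$ is the group inverse of $A$ (unique $X$ with $AXA=A$, $XAX=X$, $AX=XA$); $T^{\#}$ is the weighted graph on the vertex set of $T$ with $v_iv_j$ an edge iff $(A^{\#})_{ij}\neq 0$, weighted by that entry. *)

From HB Require Import structures.
From mathcomp Require Import all_boot all_order all_algebra.
Set Implicit Arguments. Unset Strict Implicit. Unset Printing Implicit Defensive.
Import Order.TTheory GRing.Theory Num.Theory.
Local Open Scope ring_scope.

Definition mx_graph (R : nzRingType) (n : nat) (M : 'M[R]_n) : rel 'I_n :=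
  fun i j => (i != j) && (M i j != 0).

Definition connected_graph (n : nat) (e : rel 'I_n) : Prop :=
  forall i j : 'I_n, connect e i j.

Definition acyclic_graph (n : nat) (e : rel 'I_n) : Prop :=
  forall c : seq 'I_n, uniq c -> (3 <= size c)%N -> ~~ cycle e c.

Definition is_tree (n : nat) (e : rel 'I_n) : Prop :=
  (0 < n)%N /\ connected_graph e /\ acyclic_graph e.

Definition is_star (n : nat) (e : rel 'I_n) : Prop :=
  exists c : 'I_n, forall i j : 'I_n, e i j -> (i == c) || (j == c).

Definition is_group_inverse (R : nzRingType) (n : nat) (A X : 'M[R]_n) : Prop :=
  [/\ A *m X *m A = A, X *m A *m X = X & A *m X = X *m A].

From HB Require Import structures.
From mathcomp Require Import all_boot all_order all_algebra.
Set Implicit Arguments. Unset Strict Implicit. Unset Printing Implicit Defensive.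
Import Order.TTheory GRing.Theory Num.Theory.

(* If every edge of T contains the vertex c, then A = u e_c^T + e_c u^T with u the
   c-th column of A, so A^3 = |u|^2 A and A^# = |u|^-2 A: T^# = T.
   Conversely, let T^# be a tree. In the support of a nonzero left null vector v of A,
   no vertex outside it has exactly one neighbour inside it, so a longest path starting
   in the support starts at a leaf l of T; let m be its neighbour. The column
   z = P e_l of the symmetric projector P = I - A A^# onto ker A has z_m = 0 and
   z_l = |z|^2 not in {0, 1}, and column l of A^# A = I - P reads
   A^#_jm A_ml = [j = l] - z_j: the neighbours of m in T^# are the support of z.
   As A^# z = 0 and T^# is acyclic, each of them is a leaf of T^#, so T^# is a star
   centred at m with zero diagonal, and the first part applied to (A^#, A) shows
   that T is that star. *)

Lemma acyclic_cycleF n (e : rel 'I_n) (c : seq 'I_n) :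
  acyclic_graph e -> uniq c -> (3 <= size c)%N -> cycle e c -> False.
Proof. by move=> acyc uc sc; apply/negP; apply: acyc. Qed.

Lemma uniq_size_ord n (s : seq 'I_n) : uniq s -> (size s <= n)%N.
Proof. by move=> us; have := max_card (mem s); rewrite card_ord (card_uniqP us). Qed.

Lemma eq_is_tree n (e e' : rel 'I_n) : e =2 e' -> is_tree e -> is_tree e'.
Proof.
move=> ee' [n_gt0 [conn acyc]]; split=> //; split=> [i j|c uc sc].
  by rewrite -(eq_connect ee').
by rewrite -(eq_cycle ee'); apply: acyc.
Qed.

Lemma connected_edge_nbr n (e : rel 'I_n) i0 j0 :
  connected_graph e -> e i0 j0 -> forall x, exists y, e x y.
Proof.
move=> conn e0 x; have [-> | x_i0] := eqVneq x i0; first by exists j0.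
have /connectP[[|y q] /= pth last_q] := conn x i0; first by rewrite last_q eqxx in x_i0.
by case/andP: pth => exy _; exists y.
Qed.

Section Forest.
Variables (n : nat) (e : rel 'I_n).
Hypotheses (e_sym : symmetric e) (e_irr : irreflexive e) (e_acyc : acyclic_graph e).

Lemma acyclic_path_chord (a x b : 'I_n) (r : seq 'I_n) :
  path e a (x :: r) -> uniq (a :: x :: r) -> b \in r -> ~~ e b a.
Proof.
move=> + + b_r; case/splitPr: b_r => r1 r2.
change (path e a ((x :: r1) ++ b :: r2) -> uniq ((a :: x :: r1) ++ b :: r2) -> ~~ e b a).
rewrite cat_path cat_uniq => /andP[p1 /andP[elb _]] /and3P[u1 /norP[b_out _] _].
apply/negP => eba.
apply: (@acyclic_cycleF _ e (b :: a :: x :: r1)) => //=; first by rewrite b_out.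
by rewrite eba rcons_path elb andbT.
Qed.

Variable p : pred 'I_n.
Hypothesis p_balanced :
  forall x y, p x -> e x y -> ~~ p y -> exists u : 'I_n, [/\ u != x, p u & e u y].

Lemma support_path_extend a r y :
  p a -> path e a r -> uniq (a :: r) -> e a y -> y \notin a :: r ->
  exists (a' : 'I_n) (r' : seq 'I_n),
    [/\ p a', path e a' r', uniq (a' :: r') & (size r < size r')%N].
Proof.
move=> pa pth un eay y_out.
have [py | npy] := boolP (p y).
  exists y, (a :: r); split=> //; first by rewrite /= e_sym eay pth.
  by rewrite cons_uniq y_out.
have [u [u_a pu euy]] := p_balanced pa eay npy.
exists u, (y :: a :: r); split=> //; first by rewrite /= euy e_sym eay.
have u_y : u != y by apply: contraTneq euy => ->; rewrite e_irr.
have u_r : u \notin r.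
  apply: contraL euy => ur; apply: (@acyclic_path_chord y a u r) => //.
    by rewrite /= e_sym eay.
  by rewrite cons_uniq y_out.
by rewrite cons_uniq (cons_uniq y) y_out !inE !negb_or u_y u_a u_r.
Qed.

Hypothesis e_nbr : forall x, exists y, e x y.

Lemma support_leaf a0 : p a0 -> exists l m : 'I_n, p l /\ forall j, e l j = (j == m).
Proof.
move=> pa0.
suff leaf_from k a r : (n <= size r + k)%N -> p a -> path e a r -> uniq (a :: r) ->
    exists l m : 'I_n, p l /\ forall j, e l j = (j == m).
  exact: (leaf_from n a0 [::]).
elim: k a r => [|k IH] a r r_k pa pth un.
  by have /= := uniq_size_ord un; rewrite ltnNge -(addn0 (size r)) r_k.
have [/existsP[y /andP[eay y_out]] | a_closed] := boolP [exists y, e a y && (y \notin a :: r)].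
  have [a' [r' [pa' pth' un' r_r']]] := support_path_extend pa pth un eay y_out.
  by apply: (IH a' r') => //; rewrite (leq_trans r_k) // addnS -addSn leq_add2r.
have a_out y : e a y -> y != a by apply: contraTneq => ->; rewrite e_irr.
case: r pth un {r_k} a_closed => [|x r] pth un a_closed.
  have [y eay] := e_nbr a; case/existsP: a_closed; exists y.
  by rewrite eay !inE a_out.
exists a, x; split=> // j; apply/idP/eqP => [eaj | ->]; last by case/andP: pth.
apply/eqP; apply: contraNT a_closed => j_x; apply/existsP; exists j.
rewrite eaj !inE !negb_or a_out //= j_x /=; apply: contraL eaj => j_r.
by rewrite e_sym; apply: (acyclic_path_chord pth un j_r).
Qed.
End Forest.

Local Open Scope ring_scope.

Lemma sumr_eq0_other (V : zmodType) (I : finType) (F : I -> V) (x : I) :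
  \sum_i F i = 0 -> F x != 0 -> exists2 y, y != x & F y != 0.
Proof.
move=> F0 Fx; have [y /andP[y_x Fy] | none] := pickP (fun y => (y != x) && (F y != 0)).
  by exists y.
move: F0; rewrite (bigD1 x) //= big1 ?addr0 => [F0 | y y_x]; first by rewrite F0 eqxx in Fx.
by apply/eqP; move: (none y); rewrite y_x => /negbFE.
Qed.

Lemma mulmx_eq0_sum (R : pzSemiRingType) m n p (A : 'M[R]_(m, n)) (B : 'M[R]_(n, p)) :
  A *m B = 0 -> forall i k, \sum_j A i j * B j k = 0.
Proof. by move=> AB i k; have /matrixP/(_ i k) := AB; rewrite !mxE. Qed.

Lemma sumr_sqr_eq0 (R : realDomainType) (I : finType) (P : pred I) (F : I -> R) :
  \sum_(i | P i) F i ^+ 2 = 0 -> forall i, P i -> F i = 0.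
Proof.
move=> F0 i Pi; apply/eqP; rewrite -sqrf_eq0; apply/eqP.
exact: (psumr_eq0P (fun i _ => sqr_ge0 (F i)) F0 Pi).
Qed.

Section MatrixGraph.
Variables (R : nzRingType) (n : nat) (M : 'M[R]_n).

Lemma mx_graph_irr : irreflexive (mx_graph M).
Proof. by move=> i; rewrite /mx_graph eqxx. Qed.

Lemma mx_graph_sym : M^T = M -> symmetric (mx_graph M).
Proof. by move=> M_sym i j; rewrite /mx_graph eq_sym -{1}M_sym mxE. Qed.

Lemma mx_graph_diag0 : (forall i, M i i = 0) -> forall i j, mx_graph M i j = (M i j != 0).
Proof. by move=> M_diag i j; rewrite /mx_graph; case: eqVneq => // ->; rewrite M_diag eqxx. Qed.

Definition star_centred (c : 'I_n) := forall i j, M i j != 0 -> (i == c) || (j == c).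

Lemma mx_graph_starP : (forall i, M i i = 0) -> is_star (mx_graph M) <-> exists c, star_centred c.
Proof.
move=> M_diag; split=> -[c M_star]; exists c => i j.
  by rewrite -mx_graph_diag0 //; apply: M_star.
by rewrite mx_graph_diag0 //; apply: M_star.
Qed.

End MatrixGraph.

Lemma left_kernel_leaf (R : idomainType) n (A : 'M[R]_n) (v : 'rV[R]_n) :
  A^T = A -> acyclic_graph (mx_graph A) -> (forall x, exists y, mx_graph A x y) ->
  v *m A = 0 -> v != 0 ->
  exists l m : 'I_n, v 0 l != 0 /\ forall j, mx_graph A l j = (j == m).
Proof.
move=> A_sym A_acyc A_nbr vA v_neq0.
have [a v_a] : exists a, v 0 a != 0.
  apply/existsP; apply: contraNT v_neq0 => /existsPn v0.
  by apply/eqP/rowP => j; rewrite mxE; apply/eqP/negPn.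
apply: (support_leaf (mx_graph_sym A_sym) (@mx_graph_irr _ _ A) A_acyc _ A_nbr v_a).
move=> x y v_x /andP[x_y Axy] v_y; move/negPn/eqP: v_y => v_y.
have [u u_x] := sumr_eq0_other (mulmx_eq0_sum vA 0 y) (mulf_neq0 v_x Axy).
rewrite mulf_eq0 negb_or => /andP[v_u Auy].
exists u; split=> //; rewrite /mx_graph Auy andbT.
by apply: contraNneq v_u => ->; rewrite v_y.
Qed.

Section GroupInverse.
Variables (R : nzRingType) (n : nat).
Implicit Types A X Y : 'M[R]_n.

Lemma group_inverse_unique A X Y : is_group_inverse A X -> is_group_inverse A Y -> X = Y.
Proof.
case=> AXA XAX AX_XA [AYA YAY AY_YA].
have AX_YA : A *m X = Y *m A.
  by rewrite -{1}AYA AY_YA -!mulmxA AX_XA [A *m (X *m A)]mulmxA AXA.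
have AX_AY : A *m X = A *m Y by rewrite AX_YA AY_YA.
by rewrite -XAX -mulmxA AX_AY mulmxA -AX_XA AX_YA YAY.
Qed.

Lemma group_inverse_swap A X : is_group_inverse A X -> is_group_inverse X A.
Proof. by case=> AXA XAX AX_XA; split. Qed.

Lemma group_inverse0 Y : is_group_inverse 0 Y -> Y = 0.
Proof. by case=> _ <- _; rewrite mulmx0 mul0mx. Qed.

Definition ker_projector A X := 1%:M - A *m X.

Lemma mul_ker_projector A X : is_group_inverse A X ->
  A *m ker_projector A X = 0 /\ X *m ker_projector A X = 0.
Proof.
case=> AXA XAX AX_XA; rewrite /ker_projector !mulmxBr !mulmx1 !mulmxA XAX.
by rewrite -[A *m A *m X]mulmxA AX_XA mulmxA AXA !subrr.
Qed.

Lemma ker_projector_idem A X : is_group_inverse A X ->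
  ker_projector A X *m ker_projector A X = ker_projector A X.
Proof.
move=> AX; have [_ XP] := mul_ker_projector AX.
by rewrite {1}/ker_projector mulmxBl mul1mx -mulmxA XP mulmx0 subr0.
Qed.

Lemma left_kernel_ker_projector A X (v : 'rV[R]_n) :
  v *m A = 0 -> v *m ker_projector A X = v.
Proof. by move=> vA; rewrite mulmxBr mulmx1 mulmxA vA mul0mx subr0. Qed.

End GroupInverse.

Section SymmetricGroupInverse.
Variables (R : comNzRingType) (n : nat) (A X : 'M[R]_n).
Hypotheses (A_sym : A^T = A) (AX : is_group_inverse A X).

Lemma group_inverse_trmx : X^T = X.
Proof.
apply: (group_inverse_unique _ AX); case: AX => AXA XAX AX_XA.
by split; apply: trmx_inj; rewrite !trmx_mul !trmxK A_sym ?mulmxA ?AXA ?XAX.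
Qed.

Lemma ker_projector_trmx : (ker_projector A X)^T = ker_projector A X.
Proof.
case: AX => _ _ AX_XA.
by rewrite /ker_projector linearB /= trmx1 trmx_mul group_inverse_trmx A_sym AX_XA.
Qed.

End SymmetricGroupInverse.

Section StarCentred.
Variables (R : comNzRingType) (n : nat) (M : 'M[R]_n) (c : 'I_n).
Hypotheses (M_sym : M^T = M) (M_cc : M c c = 0) (M_star : star_centred M c).

Lemma star_centred_cube : M *m M *m M = (\sum_k M k c ^+ 2) *: M.
Proof.
set s := \sum_k _; pose u := col c M; pose d : 'cV[R]_n := delta_mx c 0.
have M_dec : M = u *m d^T + d *m u^T.
  apply/matrixP => i j; rewrite !mxE !big_ord1 !mxE.
  have [-> | i_c] := eqVneq i c; have [-> | j_c] := eqVneq j c;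
    rewrite ?M_cc /= ?mulr1 ?mulr0 ?mul1r ?mul0r ?addr0 ?add0r //.
    by rewrite -{1}M_sym mxE.
  by apply/eqP/negPn/negP => /M_star; rewrite (negbTE i_c) (negbTE j_c).
have outer (x y z w : 'cV[R]_n) :
    x *m y^T *m (z *m w^T) = (y^T *m z) 0 0 *: (x *m w^T).
  by rewrite mulmxA -(mulmxA x) {1}[y^T *m z]mx11_scalar mul_mx_scalar scalemxAl.
have d_u : (d^T *m u) 0 0 = 0 by rewrite trmx_delta -rowE !mxE.
have u_d : (u^T *m d) 0 0 = 0 by rewrite -[d]trmxK -trmx_mul mxE d_u.
have d_d : (d^T *m d) 0 0 = 1 by rewrite trmx_delta mul_delta_mx mxE.
have u_u : (u^T *m u) 0 0 = s.
  by rewrite mxE; apply: eq_bigr => k _; rewrite !mxE expr2.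
have M2 : M *m M = u *m u^T + s *: (d *m d^T).
  by rewrite M_dec mulmxDl !mulmxDr !outer d_u u_d d_d u_u !scale0r add0r addr0 scale1r.
rewrite M2 {1}M_dec mulmxDl !mulmxDr -!scalemxAl !outer d_u u_d d_d u_u.
by rewrite !scale0r !scaler0 addr0 add0r scale1r -scalerDr -M_dec.
Qed.

End StarCentred.

Lemma cube_group_inverse (R : fieldType) n (M : 'M[R]_n) s :
  M *m M *m M = s *: M -> s != 0 -> is_group_inverse M (s^-1 *: M).
Proof.
move=> M3 s_neq0; split; rewrite -?scalemxAl -?scalemxAr //.
  by rewrite -scalemxAl M3 scalerA mulVf // scale1r.
by rewrite M3 !scalerA divfK.
Qed.

Lemma star_centred_group_inverse (R : realFieldType) n (M Y : 'M[R]_n) c :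
  M^T = M -> M c c = 0 -> star_centred M c -> is_group_inverse M Y ->
  forall i j, (Y i j != 0) = (M i j != 0).
Proof.
move=> M_sym M_cc M_star MY.
have [s0 | s_neq0] := eqVneq (\sum_k M k c ^+ 2) 0.
  have M_c k : M k c = 0.
    exact: (sumr_sqr_eq0 (F := M^~ c) s0).
  have M0 : M = 0.
    apply/matrixP => i j; rewrite mxE; have [// | Mij] := eqVneq (M i j) 0.
    have M_c' k : M c k = 0 by rewrite -M_sym mxE M_c.
    by case/orP: (M_star _ _ Mij) => /eqP i_c; rewrite i_c ?M_c ?M_c' eqxx in Mij.
  by move: MY; rewrite M0 => /group_inverse0 -> i j; rewrite !mxE eqxx.
have := cube_group_inverse (star_centred_cube M_sym M_cc M_star) s_neq0.
move=> /(group_inverse_unique MY) -> i j.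
by rewrite mxE mulf_eq0 invr_eq0 (negbTE s_neq0).
Qed.

Lemma sym_idem_diag (R : comNzRingType) n (P : 'M[R]_n) l :
  P^T = P -> P *m P = P -> P l l = \sum_j P j l ^+ 2.
Proof.
move=> P_sym P_idem; rewrite -{1}P_idem mxE.
by apply: eq_bigr => j _; rewrite -{1}P_sym mxE expr2.
Qed.

Section KernelNeighbourhood.
Variables (R : idomainType) (n : nat) (X : 'M[R]_n) (z : 'cV[R]_n) (m : 'I_n).
Hypotheses (X_sym : X^T = X) (X_conn : connected_graph (mx_graph X)).
Hypotheses (X_acyc : acyclic_graph (mx_graph X)) (Xz : X *m z = 0) (z_m : z m 0 = 0).
Hypothesis X_row_m : forall j, (X m j != 0) = (z j 0 != 0).

Let X_ij i j : X i j = X j i.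
Proof. by rewrite -{1}X_sym mxE. Qed.

Lemma kernel_support_nbr s y : z s 0 != 0 -> y != s -> y != m -> X s y = 0.
Proof.
move=> z_s y_s y_m; have [// | X_sy] := eqVneq (X s y) 0; exfalso.
have s_m : s != m by apply: contraNneq z_s => ->; rewrite z_m.
have e_sm : mx_graph X s m by rewrite /mx_graph s_m X_ij X_row_m.
have e_ys : mx_graph X y s by rewrite /mx_graph y_s X_ij.
have [z_y | z_y] := eqVneq (z y 0) 0.
  (* Row y of X z = 0 needs a second neighbour k of y in the support, closing y s m k. *)
  have X_ys : X y s * z s 0 != 0 by rewrite mulf_neq0 // X_ij.
  have [k k_s] := sumr_eq0_other (mulmx_eq0_sum Xz y 0) X_ys.
  rewrite mulf_eq0 negb_or => /andP[X_yk z_k].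
  have k_y : k != y by apply: contraNneq z_k => ->; rewrite z_y.
  have k_m : k != m by apply: contraNneq z_k => ->; rewrite z_m.
  apply: (@acyclic_cycleF _ _ [:: y; s; m; k] X_acyc) => //=.
    by rewrite !inE !negb_or y_s y_m eq_sym k_y s_m eq_sym k_s eq_sym k_m.
  by rewrite e_ys e_sm /mx_graph eq_sym k_m X_row_m z_k k_y X_ij X_yk.
have m_y : m != y by rewrite eq_sym.
apply: (@acyclic_cycleF _ _ [:: s; m; y] X_acyc) => //=.
  by rewrite !inE !negb_or s_m eq_sym y_s m_y.
by rewrite e_sm e_ys /mx_graph m_y X_row_m z_y.
Qed.

Lemma kernel_support_cover w : (w == m) || (z w 0 != 0).
Proof.
have step x y : mx_graph X x y -> (x == m) || (z x 0 != 0) -> (y == m) || (z y 0 != 0).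
  case/andP=> x_y X_xy /orP[/eqP x_m | z_x]; first by rewrite -X_row_m -x_m X_xy orbT.
  have [// | y_m] := eqVneq y m.
  have y_x : y != x by rewrite eq_sym.
  by move: X_xy; rewrite (kernel_support_nbr z_x y_x y_m) eqxx.
have closed_cover : closed (mx_graph X) [pred w | (w == m) || (z w 0 != 0)].
  by move=> x y e_xy; apply/idP/idP; apply: step; rewrite // mx_graph_sym.
by have := closed_connect closed_cover (X_conn m w); rewrite !inE eqxx => <-.
Qed.

Lemma kernel_nbr_star : (forall i, X i i = 0) /\ star_centred X m.
Proof.
have X_diag s : X s s = 0.
  have [-> | s_m] := eqVneq s m; first by apply/eqP; rewrite -[_ == 0]negbK X_row_m z_m eqxx.
  have z_s : z s 0 != 0 by move: (kernel_support_cover s); rewrite (negbTE s_m).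
  have := mulmx_eq0_sum Xz s 0; rewrite (bigD1 s) //= big1 ?addr0 => [/eqP | k k_s].
    by rewrite mulf_eq0 (negbTE z_s) orbF => /eqP.
  by have [-> | k_m] := eqVneq k m; rewrite ?z_m ?mulr0 // kernel_support_nbr ?mul0r.
split=> // i j X_ij_neq0; have [// | i_m] := eqVneq i m; have [// | j_m] := eqVneq j m.
have z_i : z i 0 != 0 by move: (kernel_support_cover i); rewrite (negbTE i_m).
have [j_i | j_i] := eqVneq j i; first by rewrite j_i X_diag eqxx in X_ij_neq0.
by rewrite kernel_support_nbr ?eqxx in X_ij_neq0.
Qed.

End KernelNeighbourhood.

Section LeafColumn.
Variables (R : realFieldType) (n : nat) (A X : 'M[R]_n) (v : 'rV[R]_n) (l m : 'I_n).
Hypotheses (A_sym : A^T = A) (AX : is_group_inverse A X).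
Hypotheses (vA : v *m A = 0) (v_l : v 0 l != 0).
Hypothesis A_row_l : forall j, (A l j != 0) = (j == m).

Let P := ker_projector A X.

Let A_lm : A l m != 0. Proof. by rewrite A_row_l. Qed.
Let A_ml : A m l != 0. Proof. by rewrite -A_sym mxE. Qed.
Let A_row_l0 j : j != m -> A l j = 0.
Proof. by move=> j_m; apply/eqP; rewrite -[_ == 0]negbK A_row_l j_m. Qed.
Let A_col_l0 k : k != m -> A k l = 0.
Proof. by move=> k_m; rewrite -A_sym mxE A_row_l0. Qed.

Let P_col_sqr : P l l = \sum_j P j l ^+ 2.
Proof. exact: sym_idem_diag (ker_projector_trmx A_sym AX) (ker_projector_idem AX). Qed.

Lemma leaf_projector_nbr : P m l = 0.
Proof.
have := mulmx_eq0_sum (mul_ker_projector AX).1 l l; rewrite (bigD1 m) //= big1.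
  by rewrite addr0 => /eqP; rewrite mulf_eq0 (negbTE A_lm) /= => /eqP.
by move=> j j_m; rewrite A_row_l0 ?mul0r.
Qed.

Lemma leaf_projector_diag_neq0 : P l l != 0.
Proof.
apply: contraNneq v_l => P_ll; rewrite -(left_kernel_ker_projector X vA) mxE big1 // => j _.
by rewrite (@sumr_sqr_eq0 _ _ predT (P^~ l)) ?mulr0 // -P_col_sqr.
Qed.

Lemma leaf_projector_diag_neq1 : P l l != 1.
Proof.
apply/eqP => P_ll.
have P_col j : j != l -> P j l = 0.
  apply: (@sumr_sqr_eq0 _ _ (fun j => j != l) (P^~ l)).
  by move: P_col_sqr; rewrite (bigD1 l) //= P_ll expr1n -{1}[1]addr0 => /addrI.
have := mulmx_eq0_sum (mul_ker_projector AX).1 m l.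
rewrite (bigD1 l) //= big1 => [|j j_l]; last by rewrite P_col ?mulr0.
by rewrite P_ll mulr1 addr0 => /eqP; rewrite (negbTE A_ml).
Qed.

Lemma leaf_ginv_nbr_support j : (X m j != 0) = (P j l != 0).
Proof.
have XA_jl : X j m * A m l = (j == l)%:R - P j l.
  case: AX => _ _ AX_XA; transitivity ((X *m A) j l).
    by rewrite mxE (bigD1 m) //= big1 ?addr0 // => k k_m; rewrite A_col_l0 ?mulr0.
  by rewrite -AX_XA /P /ker_projector !mxE subKr.
have X_mj : X m j = X j m by rewrite -{1}(group_inverse_trmx A_sym AX) mxE.
have -> : (X m j != 0) = (X j m * A m l != 0) by rewrite X_mj mulf_eq0 (negbTE A_ml) orbF.
rewrite XA_jl.
have [-> | j_l] := eqVneq j l; last by rewrite sub0r oppr_eq0.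
by rewrite subr_eq0 eq_sym leaf_projector_diag_neq1 leaf_projector_diag_neq0.
Qed.

Lemma leaf_tree_ginv_star :
  connected_graph (mx_graph X) -> acyclic_graph (mx_graph X) -> star_centred A m.
Proof.
move=> X_conn X_acyc; have X_sym := group_inverse_trmx A_sym AX.
have [X_diag X_star] : (forall i, X i i = 0) /\ star_centred X m.
  apply: (kernel_nbr_star (z := col l P)) => //.
  - by rewrite colE mulmxA (mul_ker_projector AX).2 mul0mx.
  - by rewrite mxE leaf_projector_nbr.
  - by move=> j; rewrite mxE leaf_ginv_nbr_support.
have XA := star_centred_group_inverse X_sym (X_diag m) X_star (group_inverse_swap AX).
by move=> i j; rewrite XA; apply: X_star.
Qed.

End LeafColumn.


Theorem lemma2p11 (R : realFieldType) (n : nat) (A X : 'M[R]_n) :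
  A^T = A ->
  (forall i : 'I_n, A i i = 0) ->
  is_tree (mx_graph A) ->
  \det A = 0 ->
  is_group_inverse A X ->
  (is_tree (mx_graph X) <-> is_star (mx_graph A)).
Proof.
move=> A_sym A_diag A_tree detA AX; have [n_gt0 [A_conn A_acyc]] := A_tree.
split=> [[_ [X_conn X_acyc]] | /(mx_graph_starP A_diag)[c A_star]]; last first.
  have XA := star_centred_group_inverse A_sym (A_diag c) A_star AX.
  by apply: eq_is_tree A_tree => i j; rewrite /mx_graph XA.
have [/existsP[i0 /existsP[j0 A_ij0]] | no_edge] := boolP [exists i, exists j, mx_graph A i j].
  have [v v_neq0 vA] := det0P (introT eqP detA).
  have A_nbr := connected_edge_nbr A_conn A_ij0.
  have [l [m [v_l leaf_l]]] := left_kernel_leaf A_sym A_acyc A_nbr vA v_neq0.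
  have A_row_l j : (A l j != 0) = (j == m) by rewrite -leaf_l (mx_graph_diag0 A_diag).
  apply/(mx_graph_starP A_diag); exists m.
  exact: (leaf_tree_ginv_star A_sym AX vA v_l A_row_l X_conn X_acyc).
exists (Ordinal n_gt0) => i j A_ij; case/existsP: no_edge; exists i.
by apply/existsP; exists j.
Qed.
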